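(* Let $G$ be a co-bipartite graph whose vertex set is partitioned into cliques $A$ and $B$ with $|A|=n_1$ and $|B|=n_2$. Suppose there is a numbering of the vertices, $A=\{1,\dots,n_1\}$ and $B=\{1',\dots,n_2'\}$, which satisfies the Bi-Consecutive Adjacency Property. Then $G$ is a circular arc graph.
   Context: A circular arc graph is the intersection graph of a finite family of arcs of a circle. Bi-Consecutive Adjacency Property: given a partition $V(G)=A\cup B$ with vertices of $A$ numbered $1,\dots,n_1$ and vertices of $B$ numbered $1',\dots,n_2'$, the numbering satisfies the property if for every $i\in A$ and $j'\in B$ with $i$ adjacent to $j'$, either (a) $j'$ is adjacent to every $k\in A$ with $1\le k\le i$, or (b) $i$ is adjacent to every $k'\in B$ with $1'\le k'\le j'$. *)

From mathcomp Require Import all_boot.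
From Stdlib Require Import Reals ZArith.
Set Implicit Arguments. Unset Strict Implicit. Unset Printing Implicit Defensive.

Definition simple_graph (V : finType) (adj : rel V) : Prop :=
  (forall u v, adj u v = adj v u) /\ (forall u, ~~ adj u u).

(* The circle is R/Z.  A (closed) arc is given by a start point s and a length
   l with 0 <= l <= 1 (l = 0: a single point, l = 1: the whole circle);
   a real x (representing a point of R/Z) lies on the arc iff some
   integer translate x + k lies in [s, s + l]. *)
Definition on_arc (arc : R * R) (x : R) : Prop :=
  exists k : Z, (arc.1 <= x + IZR k <= arc.1 + arc.2)%R.

Definition is_arc (arc : R * R) : Prop := (0 <= arc.2 <= 1)%R.

Definition arcs_meet (a1 a2 : R * R) : Prop :=
  exists x : R, on_arc a1 x /\ on_arc a2 x.

Definition circular_arc_graph (V : finType) (adj : rel V) : Prop :=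
  exists f : V -> R * R,
    (forall v, is_arc (f v)) /\
    (forall u v, u != v -> (adj u v <-> arcs_meet (f u) (f v))).

Definition clique (V : finType) (adj : rel V) (S : {set V}) : Prop :=
  forall u v, u \in S -> v \in S -> u != v -> adj u v.

(* Bi-Consecutive Adjacency Property for numberings a : 'I_n1 -> A and
   b : 'I_n2 -> B (indices shifted to start at 0). *)
Definition BCAP (V : finType) (adj : rel V) (n1 n2 : nat)
    (a : 'I_n1 -> V) (b : 'I_n2 -> V) : Prop :=
  forall (i : 'I_n1) (j : 'I_n2), adj (a i) (b j) ->
    (forall k : 'I_n1, k <= i -> adj (b j) (a k)) \/
    (forall k : 'I_n2, k <= j -> adj (a i) (b k)).

From mathcomp Require Import all_boot.
From Stdlib Require Import Reals ZArith Lra Lia.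

Set Implicit Arguments.
Unset Strict Implicit.
Unset Printing Implicit Defensive.

(* By the property, every edge i--j' between the cliques is explained by a
   prefix: either j' sees all of 1..i, or i sees all of 1'..j'.  Hence
   i ~ j' iff i < c(j') or j' < d(i), where c(j') (resp. d(i)) is the length
   of the longest prefix of A (resp. B) seen by j' (resp. i).  Such threshold
   adjacencies are realised on the circle by placing every arc of A around 0
   and every arc of B around 1/2: the A-arc of i reaches beyond 1/4 to the
   right by an amount decreasing in i and to the left by an amount increasing
   in d(i), and symmetrically for B, so that the two arcs overlap near 1/4
   iff i < c(j') and near 3/4 iff j' < d(i). *)

Definition centered_arc (c l r : R) : R * R := (c - l, l + r)%R.

Lemma arcs_meet_sym a1 a2 : arcs_meet a1 a2 -> arcs_meet a2 a1.
Proof. by case=> x [H1 H2]; exists x. Qed.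

Lemma centered_arcs_meet c l r l' r' :
  (0 <= l)%R -> (0 <= r)%R -> (0 <= l')%R -> (0 <= r')%R ->
  arcs_meet (centered_arc c l r) (centered_arc c l' r').
Proof. by move=> *; exists c; split; exists 0%Z; rewrite /= Rplus_0_r; lra. Qed.

Lemma antipodal_arcs_meet l r l' r' :
  (0 <= l < 1/2)%R -> (0 <= r < 1/2)%R -> (0 <= l' < 1/2)%R -> (0 <= r' < 1/2)%R ->
  arcs_meet (centered_arc 0 l r) (centered_arc (1/2) l' r') <->
  (1/2 <= r + l' \/ 1/2 <= r' + l)%R.
Proof.
move=> Hl Hr Hl' Hr'; split.
- case=> x [[k1 H1] [k2 H2]]; rewrite /= in H1 H2.
  have Hlo : (-1 < IZR (k2 - k1))%R by rewrite minus_IZR; lra.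
  have Hhi : (IZR (k2 - k1) < 2)%R by rewrite minus_IZR; lra.
  apply lt_IZR in Hlo; apply lt_IZR in Hhi.
  (* the two translates differ by 0 (overlap near 1/4) or 1 (near 3/4) *)
  have [E|E] : (k2 = k1 \/ k2 = k1 + 1)%Z by lia.
  + by subst k2; lra.
  + by subst k2; rewrite plus_IZR in H2; lra.
- case=> H.
  + by exists r; split; exists 0%Z; rewrite /=; lra.
  + by exists (- l)%R; split; [exists 0%Z | exists 1%Z]; rewrite /=; lra.
Qed.

Lemma ltn_bigmax_downclosed n (P : pred 'I_n) :
  (forall i k : 'I_n, k <= i -> P i -> P k) ->
  forall i, P i = (i < \max_(k | P k) k.+1).
Proof.
move=> downP i; apply/idP/idP => [Pi|].
  exact: (@leq_bigmax_cond _ P (fun k => (nat_of_ord k).+1) i Pi).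
apply: contraLR => notPi; rewrite -leqNgt; apply/bigmax_leqP => k Pk.
by rewrite ltnNge; apply: contra notPi => /downP; apply.
Qed.

Lemma bigmax_succ_ord_leq n (P : pred 'I_n) : \max_(k | P k) k.+1 <= n.
Proof. by apply/bigmax_leqP => k _; apply: ltn_ord. Qed.

Lemma BCAP_threshold (V : finType) (adj : rel V) n1 n2
    (a : 'I_n1 -> V) (b : 'I_n2 -> V) :
  (forall u v, adj u v = adj v u) -> BCAP adj a b ->
  exists (c : 'I_n2 -> nat) (d : 'I_n1 -> nat),
    [/\ forall j, c j <= n1, forall i, d i <= n2 &
        forall i j, adj (a i) (b j) = (i < c j) || (j < d i)].
Proof.
move=> adjC bcap.
pose seenA j := [pred i : 'I_n1 | [forall k : 'I_n1, (k <= i) ==> adj (b j) (a k)]].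
pose seenB i := [pred j : 'I_n2 | [forall k : 'I_n2, (k <= j) ==> adj (a i) (b k)]].
exists (fun j => \max_(i | seenA j i) i.+1), (fun i => \max_(j | seenB i j) j.+1).
split=> [j|i|i j]; rewrite ?bigmax_succ_ord_leq //.
have downA (i1 i2 : 'I_n1) : i2 <= i1 -> seenA j i1 -> seenA j i2.
  move=> le_i21 /forallP seen; apply/forallP => k; apply/implyP => le_k2.
  exact: (implyP (seen k) (leq_trans le_k2 le_i21)).
have downB (j1 j2 : 'I_n2) : j2 <= j1 -> seenB i j1 -> seenB i j2.
  move=> le_j21 /forallP seen; apply/forallP => k; apply/implyP => le_k2.
  exact: (implyP (seen k) (leq_trans le_k2 le_j21)).
rewrite -(ltn_bigmax_downclosed downA) -(ltn_bigmax_downclosed downB).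
apply/idP/orP => [/(bcap i j) [seen|seen]|[/forallP/(_ i)|/forallP/(_ j)]].
- by left; apply/forallP => k; apply/implyP/seen.
- by right; apply/forallP => k; apply/implyP/seen.
- by rewrite leqnn adjC.
- by rewrite leqnn.
Qed.

Lemma quarters_le (e : R) p q : (0 < e)%R ->
  (1/2 <= 1/4 - INR p * e + (1/4 + INR q * e))%R <-> p <= q.
Proof.
move=> e_gt0; split=> [H|/leP/le_INR H].
- apply/leP/INR_le/Rnot_lt_le => lt_qp.
  have : (INR q * e < INR p * e)%R by apply: Rmult_lt_compat_r.
  lra.
- have : (INR p * e <= INR q * e)%R by apply: Rmult_le_compat_r; lra.
  lra.
Qed.

Section ThresholdArcs.
Variables (n1 n2 : nat) (c : 'I_n2 -> nat) (d : 'I_n1 -> nat).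
Hypotheses (c_le : forall j, c j <= n1) (d_le : forall i, d i <= n2).

(* The integers scaled below are at most n1 + n2, so all arc lengths stay in
   [1/8, 3/8]; the successor only guards against dividing by 0. *)
Definition threshold_unit : R := / (8 * INR (n1 + n2).+1).

Definition threshold_arcA (i : 'I_n1) : R * R :=
  centered_arc 0 (1/4 + INR (d i) * threshold_unit) (1/4 - INR i.+1 * threshold_unit).

Definition threshold_arcB (j : 'I_n2) : R * R :=
  centered_arc (1/2) (1/4 + INR (c j) * threshold_unit) (1/4 - INR j.+1 * threshold_unit).

Lemma threshold_unit_gt0 : (0 < threshold_unit)%R.
Proof. by apply/Rinv_0_lt_compat/Rmult_lt_0_compat; [lra | apply: lt_0_INR; lia]. Qed.

Lemma threshold_shift_bounds m : m <= n1 + n2 ->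
  (0 <= INR m * threshold_unit <= 1/8)%R.
Proof.
move=> /leP le_m; have e_gt0 := threshold_unit_gt0.
have N_gt0 : (0 < INR (n1 + n2).+1)%R by apply: lt_0_INR; lia.
split; first by apply: Rmult_le_pos; [apply: pos_INR | lra].
have <- : (INR (n1 + n2).+1 * threshold_unit = 1/8)%R
  by rewrite /threshold_unit; field; lra.
by apply: Rmult_le_compat_r; [lra | apply: le_INR; lia].
Qed.

Lemma threshold_lengths_bounds m k : m <= n1 + n2 -> k < n1 + n2 ->
  (1/4 <= 1/4 + INR m * threshold_unit <= 3/8)%R /\
  (1/8 <= 1/4 - INR k.+1 * threshold_unit <= 1/4)%R.
Proof.
move=> le_m lt_k; have := threshold_shift_bounds le_m.
by have := threshold_shift_bounds lt_k; lra.
Qed.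

Lemma threshold_arcA_bounds i :
  (1/4 <= 1/4 + INR (d i) * threshold_unit <= 3/8)%R /\
  (1/8 <= 1/4 - INR i.+1 * threshold_unit <= 1/4)%R.
Proof.
apply: threshold_lengths_bounds; first exact: leq_trans (d_le i) (leq_addl _ _).
exact: leq_trans (ltn_ord i) (leq_addr _ _).
Qed.

Lemma threshold_arcB_bounds j :
  (1/4 <= 1/4 + INR (c j) * threshold_unit <= 3/8)%R /\
  (1/8 <= 1/4 - INR j.+1 * threshold_unit <= 1/4)%R.
Proof.
apply: threshold_lengths_bounds; first exact: leq_trans (c_le j) (leq_addr _ _).
exact: leq_trans (ltn_ord j) (leq_addl _ _).
Qed.

Lemma threshold_arcA_is_arc i : is_arc (threshold_arcA i).
Proof. by have := threshold_arcA_bounds i; rewrite /is_arc /=; lra. Qed.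

Lemma threshold_arcB_is_arc j : is_arc (threshold_arcB j).
Proof. by have := threshold_arcB_bounds j; rewrite /is_arc /=; lra. Qed.

Lemma threshold_arcsA_meet i i' : arcs_meet (threshold_arcA i) (threshold_arcA i').
Proof.
have := threshold_arcA_bounds i; have := threshold_arcA_bounds i'.
by move=> *; apply: centered_arcs_meet; lra.
Qed.

Lemma threshold_arcsB_meet j j' : arcs_meet (threshold_arcB j) (threshold_arcB j').
Proof.
have := threshold_arcB_bounds j; have := threshold_arcB_bounds j'.
by move=> *; apply: centered_arcs_meet; lra.
Qed.

Lemma threshold_arcsAB_meet i j :
  arcs_meet (threshold_arcA i) (threshold_arcB j) <-> (i < c j) || (j < d i).
Proof.
have := threshold_arcA_bounds i; have := threshold_arcB_bounds j => *.
have e_gt0 := threshold_unit_gt0.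
rewrite antipodal_arcs_meet ?quarters_le //; try lra.
by split=> [[]|/orP[]] ->; rewrite ?orbT; auto.
Qed.

End ThresholdArcs.

Lemma inj_card_onto (T : finType) n (f : 'I_n -> T) (S : {set T}) :
  injective f -> (forall i, f i \in S) -> #|S| = n ->
  forall v, v \in S -> exists i, f i = v.
Proof.
move=> inj_f fS cardS v.
have -> : S = [set f i | i in 'I_n].
  apply/esym/eqP; rewrite eqEcard card_imset // card_ord cardS leqnn andbT.
  by apply/subsetP => _ /imsetP[i _ ->].
by case/imsetP => i _ ->; exists i.
Qed.

Section CoBipartiteArcs.
Variables (V : finType) (adj : rel V) (A B : {set V}) (n1 n2 : nat).
Variables (a : 'I_n1 -> V) (b : 'I_n2 -> V).
Hypotheses (adjC : forall u v, adj u v = adj v u) (coverAB : A :|: B = [set: V]).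
Hypotheses (cliqueA : clique adj A) (cliqueB : clique adj B).
Hypotheses (cardA : #|A| = n1) (cardB : #|B| = n2).
Hypotheses (inj_a : injective a) (aA : forall i, a i \in A).
Hypotheses (inj_b : injective b) (bB : forall j, b j \in B).
Variables (fA : 'I_n1 -> R * R) (fB : 'I_n2 -> R * R).
Hypotheses (fA_arc : forall i, is_arc (fA i)) (fB_arc : forall j, is_arc (fB j)).
Hypotheses (fA_meet : forall i i', arcs_meet (fA i) (fA i')).
Hypotheses (fB_meet : forall j j', arcs_meet (fB j) (fB j')).
Hypothesis fAB_meet : forall i j, arcs_meet (fA i) (fB j) <-> adj (a i) (b j).

Definition cobipartite_arc (v : V) : R * R :=
  if [pick i | a i == v] is Some i then fA i
  else if [pick j | b j == v] is Some j then fB j else (0, 0)%R (* unreachable *).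

Variant cobipartite_arc_spec (v : V) : R * R -> Prop :=
  | ArcA i of a i = v : cobipartite_arc_spec v (fA i)
  | ArcB j of b j = v : cobipartite_arc_spec v (fB j).

Lemma cobipartite_arcP v : cobipartite_arc_spec v (cobipartite_arc v).
Proof.
rewrite /cobipartite_arc; case: pickP => [i /eqP|notA]; first exact: ArcA.
case: pickP => [j /eqP|notB]; first exact: ArcB.
have : v \in A :|: B by rewrite coverAB inE.
case/setUP => [/(inj_card_onto inj_a aA cardA) | /(inj_card_onto inj_b bB cardB)] [k def_v].
- by have := notA k; rewrite /= def_v eqxx.
- by have := notB k; rewrite /= def_v eqxx.
Qed.

Lemma cobipartite_circular_arc : circular_arc_graph adj.
Proof.
exists cobipartite_arc; split=> [v|u v].
  by case: cobipartite_arcP.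
case: cobipartite_arcP => [i <-|j <-]; case: cobipartite_arcP => [i' <-|j' <-] neq.
- by split=> _; [apply: fA_meet | apply: cliqueA].
- by rewrite fAB_meet.
- by rewrite adjC -fAB_meet; split; apply: arcs_meet_sym.
- by split=> _; [apply: fB_meet | apply: cliqueB].
Qed.

End CoBipartiteArcs.

Theorem lemma3 (V : finType) (adj : rel V) (A B : {set V})
    (n1 n2 : nat) (a : 'I_n1 -> V) (b : 'I_n2 -> V) :
  simple_graph adj ->
  A :&: B = set0 -> A :|: B = [set: V] ->
  clique adj A -> clique adj B ->
  #|A| = n1 -> #|B| = n2 ->
  injective a -> (forall i, a i \in A) ->
  injective b -> (forall j, b j \in B) ->
  BCAP adj a b ->
  circular_arc_graph adj.
Proof.
move=> [adjC _] _ coverAB cliqueA cliqueB cardA cardB inj_a aA inj_b bB bcap.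
have [c [d [c_le d_le adj_threshold]]] := BCAP_threshold adjC bcap.
apply: (cobipartite_circular_arc adjC coverAB cliqueA cliqueB cardA cardB
          inj_a aA inj_b bB (fA := threshold_arcA n2 d) (fB := threshold_arcB n1 c)).
- exact: threshold_arcA_is_arc.
- exact: threshold_arcB_is_arc.
- exact: threshold_arcsA_meet.
- exact: threshold_arcsB_meet.
- by move=> i j; rewrite threshold_arcsAB_meet // adj_threshold.
Qed.
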